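(* Let $(T,\eta,\mu)$ be a monad on a locally small category $\mathbf{C}$, $\mathrm{Alg}(T)$ its Eilenberg–Moore category, $L\dashv R$ the free–forgetful adjunction with $LX=(TX,\mu_X)$. Let $F\colon\mathbf{C}\to\mathbf{C}$ be a functor with a distributive law $\zeta\colon TF\Rightarrow FT$ and lifting $\tilde F(A,a)=(FA,Fa\circ\zeta_A)$. Let $c\colon X\to FTX$ be a coalgebra with determinization $c^\#=F\mu_X\circ\zeta_{TX}\circ Tc\colon LX\to\tilde FLX$. Let $\Psi\colon\mathbf{C}^{\mathrm{op}}\to\mathbf{Pos}$ have fibres with all meets preserved by reindexing, fix a $T$-algebra $(\Omega,o)$ and $d_\Omega\in\Psi\Omega$. For a $T$-algebra $A$ and $S\subseteq\mathrm{Alg}(T)(A,(\Omega,o))$, $d\in\Psi(RA)$ let $\alpha_A(S)=\bigwedge_{k\in S}\Psi(Rk)(d_\Omega)$, $\gamma_A(d)=\{k\mid d\preceq\Psi(Rk)(d_\Omega)\}$, $\mathrm{cl}_A=\gamma_A\circ\alpha_A$. Let $(\mathit{ev}_\lambda\colon\tilde F(\Omega,o)\to(\Omega,o))_{\lambda\in\Lambda}$ be $T$-algebra homomorphisms, $\Lambda_A(S)=\{\mathit{ev}_\lambda\circ\tilde Fh\mid\lambda\in\Lambda,h\in S\}$, $\mathcal{K}_A=\alpha_{\tilde FA}\circ\Lambda_A\circ\gamma_A$. Let $\alpha'_X\colon\mathcal{P}(\mathbf{C}(X,\Omega))\to\mathcal{P}(\mathrm{Alg}(T)(LX,(\Omega,o)))$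 be the direct image of the bijection $h\mapsto o\circ Th$, with inverse $\gamma'_X$, and $\Lambda'_X(S)=\{\mathit{ev}_\lambda\circ Fo\circ FTh\mid\lambda\in\Lambda,h\in S\}\subseteq\mathbf{C}(FTX,\Omega)$. Assume $\Lambda_{LX}$ is compatible with $\mathrm{cl}_{LX}$, i.e. $\Lambda_{LX}(\mathrm{cl}_{LX}(S))\subseteq\mathrm{cl}_{\tilde FLX}(\Lambda_{LX}(S))$ for all $S$, and fix $\Theta_{LX}\subseteq\mathrm{Alg}(T)(LX,(\Omega,o))$. Then: (1) the logic function $\mathrm{lo}_{LX}(S)=\mathcal{P}((c^\#)^\bullet)(\Lambda_{LX}(S))\cup\Theta_{LX}$ satisfies $\mathrm{lo}_{LX}(\mathrm{cl}_{LX}(S))\subseteq\mathrm{cl}_{LX}(\mathrm{lo}_{LX}(S))$ for all $S$; (2) for the behaviour function $\mathrm{be}_{LX}(d)=(c^\#)^*(\mathcal{K}_{LX}(d))\wedge\alpha_{LX}(\Theta_{LX})$ on $\Psi(TX)$ we have $\alpha_{LX}(\mu\,\mathrm{lo}_{LX})=\nu\,\mathrm{be}_{LX}$; (3) if $\Theta'_X\subseteq\mathbf{C}(X,\Omega)$ satisfies $\Theta_{LX}=\alpha'_X(\Theta'_X)$ and $\mathrm{lo}'_X(S)=\mathcal{P}(c^\bullet)(\Lambda'_X(S))\cup\Theta'_X$, then $\alpha'_X\circ\mathrm{lo}'_X\circ\gamma'_X=\mathrm{lo}_{LX}$ and $\alpha_{LX}(\alpha'_X(\mu\,\mathrm{l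o}'_X))=\nu\,\mathrm{be}_{LX}$.
   Context: $\mu\,f$ denotes the least fixpoint of a monotone map on a powerset ordered by $\subseteq$; $\nu\,\mathrm{be}_{LX}$ is the greatest fixpoint w.r.t. $\preceq$ in the complete lattice $\Psi(TX)$. $(c^\#)^\bullet$ is precomposition with $c^\#$ on homomorphisms $\tilde FLX\to(\Omega,o)$, $c^\bullet$ is precomposition with $c$ on $\mathbf{C}(FTX,\Omega)$, $\mathcal{P}(\cdot)$ of a map is its direct image, and $(c^\#)^*=\Psi(Rc^\#)$. A distributive law satisfies $\zeta_X\circ\eta_{FX}=F\eta_X$ and $\zeta_X\circ\mu_{FX}=F\mu_X\circ\zeta_{TX}\circ T\zeta_X$. *)

From Stdlib Require Import Classical FunctionalExtensionality PropExtensionality.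
Set Implicit Arguments.
Unset Strict Implicit.

Record Category := {
  ob :> Type;
  hom : ob -> ob -> Type;
  idm : forall X, hom X X;
  comp : forall X Y Z, hom Y Z -> hom X Y -> hom X Z;
  comp_idl : forall X Y (f : hom X Y), comp (idm Y) f = f;
  comp_idr : forall X Y (f : hom X Y), comp f (idm X) = f;
  comp_assoc : forall X Y Z W (f : hom Z W) (g : hom Y Z) (h : hom X Y),
      comp f (comp g h) = comp (comp f g) h }.
Arguments hom : clear implicits.
Arguments idm {_} X.
Arguments comp {_ X Y Z} _ _.
Notation "g ∘ f" := (comp g f) (at level 40, left associativity).

Record Functor (C : Category) := {
  fobj :> C -> C;
  fmap : forall X Y, hom C X Y -> hom C (fobj X) (fobj Y);
  fmap_id : forall X, fmap (idm X) = idm (fobj X);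
  fmap_comp : forall X Y Z (g : hom C Y Z) (f : hom C X Y),
      fmap (g ∘ f) = fmap g ∘ fmap f }.
Arguments fmap {C} _ {X Y} _.

Record Monad (C : Category) := {
  mT :> Functor C;
  eta : forall X, hom C X (mT X);
  mu : forall X, hom C (mT (mT X)) (mT X);
  eta_nat : forall X Y (f : hom C X Y), fmap mT f ∘ eta X = eta Y ∘ f;
  mu_nat : forall X Y (f : hom C X Y),
      fmap mT f ∘ mu X = mu Y ∘ fmap mT (fmap mT f);
  mu_eta_l : forall X, mu X ∘ eta (mT X) = idm (mT X);
  mu_eta_r : forall X, mu X ∘ fmap mT (eta X) = idm (mT X);
  mu_assoc : forall X, mu X ∘ mu (mT X) = mu X ∘ fmap mT (mu X) }.
Arguments eta {C} _ X.
Arguments mu {C} _ X.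

Record Alg (C : Category) (T : Monad C) := {
  carrier : C;
  str : hom C (T carrier) carrier;
  str_eta : str ∘ eta T carrier = idm carrier;
  str_mu : str ∘ mu T carrier = str ∘ fmap T str }.
Arguments carrier {C T} _.
Arguments str {C T} _.

Definition is_alg_hom (C : Category) (T : Monad C) (A B : Alg T)
  (f : hom C (carrier A) (carrier B)) : Prop :=
  f ∘ str A = str B ∘ fmap T f.

Definition AlgHom (C : Category) (T : Monad C) (A B : Alg T) : Type :=
  { f : hom C (carrier A) (carrier B) | is_alg_hom f }.

Definition Rm (C : Category) (T : Monad C) (A B : Alg T) (k : AlgHom A B)
  : hom C (carrier A) (carrier B) := proj1_sig k.

Lemma alg_comp_hom (C : Category) (T : Monad C) (A B D : Alg T)
  (g : AlgHom B D) (f : AlgHom A B) : is_alg_hom (Rm g ∘ Rm f).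
Proof.
  destruct g as [g Hg], f as [f Hf]; unfold is_alg_hom in *; simpl.
  rewrite <- comp_assoc, Hf, comp_assoc, Hg, <- comp_assoc, <- fmap_comp.
  reflexivity.
Qed.

Definition algcomp (C : Category) (T : Monad C) (A B D : Alg T)
  (g : AlgHom B D) (f : AlgHom A B) : AlgHom A D :=
  exist _ (Rm g ∘ Rm f) (alg_comp_hom g f).

Definition FreeAlg (C : Category) (T : Monad C) (X : C) : Alg T :=
  {| carrier := T X; str := mu T X;
     str_eta := mu_eta_l T X; str_mu := mu_assoc T X |}.

Record DistLaw (C : Category) (T : Monad C) (F : Functor C) := {
  zeta : forall X, hom C (T (F X)) (F (T X));
  zeta_nat : forall X Y (f : hom C X Y),
      fmap F (fmap T f) ∘ zeta X = zeta Y ∘ fmap T (fmap F f);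
  zeta_eta : forall X, zeta X ∘ eta T (F X) = fmap F (eta T X);
  zeta_mu : forall X,
      zeta X ∘ mu T (F X) = fmap F (mu T X) ∘ zeta (T X) ∘ fmap T (zeta X) }.
Arguments zeta {C T F} _ X.

Section Lifting.
Variables (C : Category) (T : Monad C) (F : Functor C) (Z : DistLaw T F).

Lemma lift_eta (A : Alg T) :
  (fmap F (str A) ∘ zeta Z (carrier A)) ∘ eta T (F (carrier A)) = idm _.
Proof.
  rewrite <- comp_assoc, zeta_eta, <- fmap_comp, str_eta, fmap_id. reflexivity.
Qed.

Lemma lift_mu (A : Alg T) :
  (fmap F (str A) ∘ zeta Z (carrier A)) ∘ mu T (F (carrier A)) =
  (fmap F (str A) ∘ zeta Z (carrier A)) ∘ fmap T (fmap F (str A) ∘ zeta Z (carrier A)).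
Proof.
  rewrite <- comp_assoc, zeta_mu, !comp_assoc, <- fmap_comp, str_mu, fmap_comp.
  rewrite <- (comp_assoc (fmap F (str A))), zeta_nat, fmap_comp, !comp_assoc.
  reflexivity.
Qed.

Definition liftF (A : Alg T) : Alg T :=
  {| carrier := F (carrier A); str := fmap F (str A) ∘ zeta Z (carrier A);
     str_eta := lift_eta A; str_mu := lift_mu A |}.

Lemma liftHom_hom (A B : Alg T) (h : AlgHom A B) :
  @is_alg_hom C T (liftF A) (liftF B) (fmap F (Rm h)).
Proof.
  destruct h as [h Hh]; unfold is_alg_hom in *; simpl.
  rewrite comp_assoc, <- fmap_comp, Hh, fmap_comp, <- !comp_assoc, zeta_nat.
  reflexivity.
Qed.

Definition liftHom (A B : Alg T) (h : AlgHom A B) : AlgHom (liftF A) (liftF B) :=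
  exist _ (fmap F (Rm h)) (liftHom_hom h).

Definition csharp_map (X : C) (c : hom C X (F (T X))) : hom C (T X) (F (T X)) :=
  fmap F (mu T X) ∘ zeta Z (T X) ∘ fmap T c.

Lemma csharp_hom (X : C) (c : hom C X (F (T X))) :
  @is_alg_hom C T (FreeAlg T X) (liftF (FreeAlg T X)) (csharp_map c).
Proof.
  unfold is_alg_hom, csharp_map; simpl.
  rewrite <- !comp_assoc, mu_nat.
  rewrite (comp_assoc (zeta Z (T X))), zeta_mu, <- !comp_assoc.
  rewrite (comp_assoc (fmap F (mu T X))), <- fmap_comp, mu_assoc, fmap_comp.
  rewrite <- !comp_assoc, (comp_assoc (fmap F (fmap T (mu T X)))), zeta_nat.
  rewrite !fmap_comp, <- !comp_assoc. reflexivity.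
Qed.

Definition csharp (X : C) (c : hom C X (F (T X)))
  : AlgHom (FreeAlg T X) (liftF (FreeAlg T X)) :=
  exist _ (csharp_map c) (csharp_hom c).

End Lifting.

Lemma freeHom_hom (C : Category) (T : Monad C) (Om : Alg T) (X : C)
  (h : hom C X (carrier Om)) :
  @is_alg_hom C T (FreeAlg T X) Om (str Om ∘ fmap T h).
Proof.
  unfold is_alg_hom; simpl.
  rewrite <- comp_assoc, mu_nat, comp_assoc, str_mu, <- comp_assoc, <- fmap_comp.
  reflexivity.
Qed.

Definition freeHom (C : Category) (T : Monad C) (Om : Alg T) (X : C)
  (h : hom C X (carrier Om)) : AlgHom (FreeAlg T X) Om :=
  exist _ (str Om ∘ fmap T h) (freeHom_hom h).

(* ---------- Psi : C^op -> Pos, fibres with all meets, reindexing preserves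
   all meets ---------- *)
Record Doctrine (C : Category) := {
  fib : C -> Type;
  fle : forall X, fib X -> fib X -> Prop;
  fle_refl : forall X (d : fib X), fle d d;
  fle_trans : forall X (d e f : fib X), fle d e -> fle e f -> fle d f;
  fle_antisym : forall X (d e : fib X), fle d e -> fle e d -> d = e;
  fmeet : forall X, (fib X -> Prop) -> fib X;
  fmeet_lb : forall X (P : fib X -> Prop) d, P d -> fle (fmeet P) d;
  fmeet_glb : forall X (P : fib X -> Prop) d,
      (forall e, P e -> fle d e) -> fle d (fmeet P);
  reidx : forall X Y, hom C X Y -> fib Y -> fib X;
  reidx_id : forall X (d : fib X), reidx (idm X) d = d;
  reidx_comp : forall X Y W (g : hom C Y W) (f : hom C X Y) d,
      reidx (g ∘ f) d = reidx f (reidx g d);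
  reidx_mono : forall X Y (f : hom C X Y) d e,
      fle d e -> fle (reidx f d) (reidx f e);
  reidx_meet : forall X Y (f : hom C X Y) (P : fib Y -> Prop),
      reidx f (fmeet P) = fmeet (fun e => exists d, P d /\ e = reidx f d) }.
Arguments fle {C} _ {X} _ _.
Arguments fmeet {C} _ {X} _.
Arguments reidx {C} _ {X Y} _ _.

Definition fmeet2 (C : Category) (Psi : Doctrine C) (X : C) (d e : fib Psi X) :=
  fmeet Psi (fun u => u = d \/ u = e).
Definition fjoin (C : Category) (Psi : Doctrine C) (X : C) (P : fib Psi X -> Prop) :=
  fmeet Psi (fun u => forall e, P e -> fle Psi e u).
Definition gfp (C : Category) (Psi : Doctrine C) (X : C)
  (f : fib Psi X -> fib Psi X) : fib Psi X :=
  fjoin (fun d => fle Psi d (f d)).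

Definition pset (A : Type) := A -> Prop.
Definition psubset (A : Type) (S S' : pset A) := forall x, S x -> S' x.
Definition punion (A : Type) (S S' : pset A) : pset A := fun x => S x \/ S' x.
Definition pimage (A B : Type) (f : A -> B) (S : pset A) : pset B :=
  fun y => exists x, S x /\ y = f x.
Definition lfp (A : Type) (f : pset A -> pset A) : pset A :=
  fun x => forall S, psubset (f S) S -> S x.

Section Operators.
Variables (C : Category) (T : Monad C) (F : Functor C) (Z : DistLaw T F)
  (Psi : Doctrine C) (Om : Alg T) (dOm : fib Psi (carrier Om))
  (Lam : Type) (ev : Lam -> AlgHom (liftF Z Om) Om).

Definition alphaA (A : Alg T) (S : pset (AlgHom A Om)) : fib Psi (carrier A) :=
  fmeet Psi (fun e => exists k, S k /\ e = reidx Psi (Rm k) dOm).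
Definition gammaA (A : Alg T) (d : fib Psi (carrier A)) : pset (AlgHom A Om) :=
  fun k => fle Psi d (reidx Psi (Rm k) dOm).
Definition clA (A : Alg T) (S : pset (AlgHom A Om)) : pset (AlgHom A Om) :=
  gammaA (alphaA S).
Definition LambdaA (A : Alg T) (S : pset (AlgHom A Om))
  : pset (AlgHom (liftF Z A) Om) :=
  fun g => exists l h, S h /\ g = algcomp (ev l) (liftHom Z h).
Definition KA (A : Alg T) (d : fib Psi (carrier A)) : fib Psi (carrier (liftF Z A)) :=
  alphaA (LambdaA (gammaA d)).

Variables (X : C) (c : hom C X (F (T X))).

Definition alpha' (S : pset (hom C X (carrier Om))) : pset (AlgHom (FreeAlg T X) Om) :=
  pimage (@freeHom C T Om X) S.
(* inverse of alpha' (= preimage along the bijection h |-> o ∘ T h) *)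
Definition gamma' (S : pset (AlgHom (FreeAlg T X) Om)) : pset (hom C X (carrier Om)) :=
  fun h => S (@freeHom C T Om X h).
Definition Lambda' (S : pset (hom C X (carrier Om)))
  : pset (hom C (F (T X)) (carrier Om)) :=
  fun g => exists l h, S h /\
     g = Rm (ev l) ∘ fmap F (str Om) ∘ fmap F (fmap T h).

Definition lo (Theta : pset (AlgHom (FreeAlg T X) Om))
  (S : pset (AlgHom (FreeAlg T X) Om)) : pset (AlgHom (FreeAlg T X) Om) :=
  punion (pimage (fun k => algcomp k (csharp Z c)) (LambdaA S)) Theta.
Definition be (Theta : pset (AlgHom (FreeAlg T X) Om))
  (d : fib Psi (T X)) : fib Psi (T X) :=
  fmeet2 (reidx Psi (Rm (csharp Z c)) (@KA (FreeAlg T X) d)) (alphaA Theta).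
Definition lo' (Theta' : pset (hom C X (carrier Om)))
  (S : pset (hom C X (carrier Om))) : pset (hom C X (carrier Om)) :=
  punion (pimage (fun k => k ∘ c) (Lambda' S)) Theta'.

End Operators.

(** The pair [alphaA -| gammaA] is an antitone Galois connection between sets of
    algebra homomorphisms into [(Omega, o)] and the fibre of [Psi].  Since [alphaA]
    turns unions into meets and precomposition with [c#] into reindexing along [c#],
    the behaviour function is the conjugate [alphaA \o lo \o gammaA] of the logic
    function.  Compatibility of [lo] with the closure [gammaA \o alphaA] makes
    [alphaA (lfp lo)] a post-fixpoint of [be], and conversely [gammaA] of any
    post-fixpoint of [be] is a pre-fixpoint of [lo]; this yields (2).  For (3), the
    bijection [h |-> o \o T h] commutes [lo'] with [lo], because the determinization
    [c#] restricts to [c] along the unit. *)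
From Stdlib Require Import FunctionalExtensionality PropExtensionality ProofIrrelevance.
Set Implicit Arguments.
Unset Strict Implicit.

Lemma pset_ext (A : Type) (S S' : pset A) :
  psubset S S' -> psubset S' S -> S = S'.
Proof.
  intros H H'. apply functional_extensionality. intros x.
  apply propositional_extensionality. split; auto.
Qed.

Lemma lfp_ind (A : Type) (f : pset A -> pset A) (S : pset A) :
  psubset (f S) S -> psubset (lfp f) S.
Proof. intros HS x Hx. exact (Hx S HS). Qed.

Lemma lfp_prefixpoint (A : Type) (f : pset A -> pset A) :
  (forall S S', psubset S S' -> psubset (f S) (f S')) ->
  psubset (f (lfp f)) (lfp f).
Proof.
  intros f_mono x Hx S HS. apply HS. revert x Hx. apply f_mono.
  apply lfp_ind, HS.
Qed.

Lemma pimage_lfp (A B : Type) (g : A -> B)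
    (f' : pset A -> pset A) (f : pset B -> pset B) :
  (forall S S', psubset S S' -> psubset (f' S) (f' S')) ->
  (forall S S', psubset S S' -> psubset (f S) (f S')) ->
  (forall S, pimage g (f' S) = f (pimage g S)) ->
  pimage g (lfp f') = lfp f.
Proof.
  intros f'_mono f_mono comm. apply pset_ext.
  - intros y [x [Hx ->]]. revert x Hx.
    apply (lfp_ind (S := fun x => lfp f (g x))). intros x Hx.
    apply lfp_prefixpoint; [exact f_mono |].
    assert (Hgx : pimage g (f' (fun x => lfp f (g x))) (g x)) by (exists x; auto).
    rewrite comm in Hgx. revert Hgx. apply f_mono.
    intros y [x' [Hx' ->]]. exact Hx'.
  - apply lfp_ind. rewrite <- comm. intros y [x [Hx ->]].
    exists x. split; [| reflexivity].
    revert x Hx. apply lfp_prefixpoint, f'_mono.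
Qed.

Section GfpFacts.
Variables (C : Category) (Psi : Doctrine C) (X : C) (b : fib Psi X -> fib Psi X).

Lemma gfp_coind (d : fib Psi X) : fle Psi d (b d) -> fle Psi d (gfp b).
Proof. intros Hd. apply fmeet_glb. intros e He. exact (He d Hd). Qed.

Lemma gfp_postfixpoint :
  (forall d e, fle Psi d e -> fle Psi (b d) (b e)) -> fle Psi (gfp b) (b (gfp b)).
Proof.
  intros b_mono. apply fmeet_lb. intros d Hd.
  apply (fle_trans Hd), b_mono, gfp_coind, Hd.
Qed.

End GfpFacts.

Section GaloisConnection.
Variables (C : Category) (T : Monad C) (Psi : Doctrine C) (Om : Alg T)
  (dOm : fib Psi (carrier Om)).

Lemma subset_gammaA (A : Alg T) (S : pset (AlgHom A Om)) (d : fib Psi (carrier A)) :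
  psubset S (gammaA dOm d) <-> fle Psi d (alphaA dOm S).
Proof.
  split.
  - intros H. apply fmeet_glb. intros e [k [Hk ->]]. exact (H k Hk).
  - intros H k Hk. apply (fle_trans H), fmeet_lb. exists k; auto.
Qed.

Lemma subset_clA (A : Alg T) (S : pset (AlgHom A Om)) : psubset S (clA dOm S).
Proof. apply subset_gammaA, fle_refl. Qed.

Lemma alphaA_anti (A : Alg T) (S S' : pset (AlgHom A Om)) :
  psubset S S' -> fle Psi (alphaA dOm S') (alphaA dOm S).
Proof.
  intros H. apply subset_gammaA. intros k Hk. apply subset_clA, H, Hk.
Qed.

Lemma gammaA_anti (A : Alg T) (d e : fib Psi (carrier A)) :
  fle Psi d e -> psubset (gammaA dOm e) (gammaA dOm d).
Proof. intros H k Hk. exact (fle_trans H Hk). Qed.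

Lemma clA_mono (A : Alg T) (S S' : pset (AlgHom A Om)) :
  psubset S S' -> psubset (clA dOm S) (clA dOm S').
Proof. intros H. apply gammaA_anti, alphaA_anti, H. Qed.

Lemma alphaA_union (A : Alg T) (S S' : pset (AlgHom A Om)) :
  alphaA dOm (punion S S') = fmeet2 (alphaA dOm S) (alphaA dOm S').
Proof.
  apply fle_antisym.
  - apply fmeet_glb. intros e [-> | ->]; apply alphaA_anti; intros k Hk;
      [left | right]; exact Hk.
  - apply subset_gammaA. intros k [Hk | Hk]; eapply fle_trans;
      [ apply fmeet_lb; left; reflexivity | exact (subset_clA Hk)
      | apply fmeet_lb; right; reflexivity | exact (subset_clA Hk) ].
Qed.

Lemma alphaA_precomp (A B : Alg T) (k : AlgHom A B) (S : pset (AlgHom B Om)) :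
  alphaA dOm (pimage (fun g => algcomp g k) S) = reidx Psi (Rm k) (alphaA dOm S).
Proof.
  unfold alphaA. rewrite reidx_meet. f_equal.
  apply pset_ext.
  - intros e [gk [[g [Hg ->]] ->]]. exists (reidx Psi (Rm g) dOm).
    split; [exists g; auto | apply reidx_comp].
  - intros e [d [[g [Hg ->]] ->]]. exists (algcomp g k).
    split; [exists g; auto | symmetry; apply reidx_comp].
Qed.

Lemma clA_precomp (A B : Alg T) (k : AlgHom A B) (S : pset (AlgHom B Om)) :
  psubset (pimage (fun g => algcomp g k) (clA dOm S))
          (clA dOm (pimage (fun g => algcomp g k) S)).
Proof.
  intros gk [g [Hg ->]]. unfold clA, gammaA. rewrite alphaA_precomp.
  simpl. rewrite reidx_comp. apply reidx_mono, Hg.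
Qed.

Lemma alphaA_lfp (A : Alg T) (f : pset (AlgHom A Om) -> pset (AlgHom A Om))
    (b : fib Psi (carrier A) -> fib Psi (carrier A)) :
  (forall S S', psubset S S' -> psubset (f S) (f S')) ->
  (forall S, psubset (f (clA dOm S)) (clA dOm (f S))) ->
  (forall d, b d = alphaA dOm (f (gammaA dOm d))) ->
  alphaA dOm (lfp f) = gfp b.
Proof.
  intros f_mono f_cl b_def.
  assert (b_mono : forall d e, fle Psi d e -> fle Psi (b d) (b e)).
  { intros d e H. rewrite !b_def. apply alphaA_anti, f_mono, gammaA_anti, H. }
  apply fle_antisym.
  - apply gfp_coind. rewrite b_def. apply subset_gammaA.
    intros k Hk. apply f_cl in Hk. revert k Hk.
    apply clA_mono, lfp_prefixpoint, f_mono.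
  - apply subset_gammaA, lfp_ind, subset_gammaA. rewrite <- b_def.
    apply gfp_postfixpoint, b_mono.
Qed.

End GaloisConnection.

Section FreeAlgebras.
Variables (C : Category) (T : Monad C).

Lemma algHom_eq (A B : Alg T) (f g : AlgHom A B) : Rm f = Rm g -> f = g.
Proof.
  destruct f as [f Hf], g as [g Hg]. simpl. intros ->.
  f_equal. apply proof_irrelevance.
Qed.

Lemma free_hom_factor (X : C) (B : Alg T) (k : AlgHom (FreeAlg T X) B) :
  Rm k = str B ∘ fmap T (Rm k ∘ eta T X).
Proof.
  destruct k as [k Hk]. unfold is_alg_hom in Hk. simpl in *.
  rewrite fmap_comp, comp_assoc, <- Hk, <- comp_assoc, mu_eta_r, comp_idr.
  reflexivity.
Qed.

Lemma free_hom_ext (X : C) (B : Alg T) (k k' : AlgHom (FreeAlg T X) B) :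
  Rm k ∘ eta T X = Rm k' ∘ eta T X -> k = k'.
Proof.
  intros H. apply algHom_eq.
  rewrite (free_hom_factor k), (free_hom_factor k'), H. reflexivity.
Qed.

Lemma freeHom_eta (Om : Alg T) (X : C) (h : hom C X (carrier Om)) :
  Rm (freeHom h) ∘ eta T X = h.
Proof.
  simpl. rewrite <- comp_assoc, eta_nat, comp_assoc, str_eta, comp_idl.
  reflexivity.
Qed.

Lemma freeHom_surj (Om : Alg T) (X : C) (k : AlgHom (FreeAlg T X) Om) :
  freeHom (Rm k ∘ eta T X) = k.
Proof. apply free_hom_ext, freeHom_eta. Qed.

End FreeAlgebras.

Section Determinization.
Variables (C : Category) (T : Monad C) (F : Functor C) (Z : DistLaw T F).

Lemma csharp_eta (X : C) (c : hom C X (F (T X))) :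
  csharp_map Z c ∘ eta T X = c.
Proof.
  unfold csharp_map.
  rewrite <- comp_assoc, eta_nat, comp_assoc, <- (comp_assoc (fmap F (mu T X))).
  rewrite zeta_eta, <- fmap_comp, mu_eta_l, fmap_id, comp_idl.
  reflexivity.
Qed.

Lemma freeHom_lift_csharp (Om : Alg T) (e : AlgHom (liftF Z Om) Om)
    (X : C) (c : hom C X (F (T X))) (h : hom C X (carrier Om)) :
  freeHom (Rm e ∘ fmap F (str Om) ∘ fmap F (fmap T h) ∘ c) =
  algcomp (algcomp e (liftHom Z (freeHom h))) (csharp Z c).
Proof.
  apply free_hom_ext. rewrite freeHom_eta. simpl.
  rewrite <- (comp_assoc _ (csharp_map Z c)), csharp_eta, fmap_comp, comp_assoc.
  reflexivity.
Qed.

End Determinization.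

Section LogicAndBehaviour.
Variables (C : Category) (T : Monad C) (F : Functor C) (Z : DistLaw T F)
  (Psi : Doctrine C) (Om : Alg T) (dOm : fib Psi (carrier Om))
  (Lam : Type) (ev : Lam -> AlgHom (liftF Z Om) Om)
  (X : C) (c : hom C X (F (T X))).

Lemma lo_mono (Theta S S' : pset (AlgHom (FreeAlg T X) Om)) :
  psubset S S' -> psubset (lo ev c Theta S) (lo ev c Theta S').
Proof.
  intros H g [[k [[l [h [Hh ->]]] ->]] | Hg].
  - left. eexists. split; [exists l, h; split; auto | reflexivity].
  - right. exact Hg.
Qed.

Lemma lo'_mono (Theta' S S' : pset (hom C X (carrier Om))) :
  psubset S S' -> psubset (lo' ev c Theta' S) (lo' ev c Theta' S').
Proof.
  intros H g [[k [[l [h [Hh ->]]] ->]] | Hg].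
  - left. eexists. split; [exists l, h; split; auto | reflexivity].
  - right. exact Hg.
Qed.

Lemma be_alphaA_lo (Theta : pset (AlgHom (FreeAlg T X) Om)) (d : fib Psi (T X)) :
  be dOm ev c Theta d = alphaA dOm (lo ev c Theta (gammaA dOm (A := FreeAlg T X) d)).
Proof. unfold lo. rewrite alphaA_union, alphaA_precomp. reflexivity. Qed.

Lemma lo_clA (Theta : pset (AlgHom (FreeAlg T X) Om)) :
  (forall S : pset (AlgHom (FreeAlg T X) Om),
     psubset (LambdaA ev (clA dOm S)) (clA dOm (LambdaA ev S))) ->
  forall S, psubset (lo ev c Theta (clA dOm S)) (clA dOm (lo ev c Theta S)).
Proof.
  intros compat S g [[k [Hk ->]] | Hg].
  - apply (clA_mono (S := pimage (fun k => algcomp k (csharp Z c)) (LambdaA ev S))).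
    { intros x Hx. left. exact Hx. }
    apply clA_precomp. exists k. split; [apply compat, Hk | reflexivity].
  - apply subset_clA. right. exact Hg.
Qed.

Lemma alpha'_gamma' (S : pset (AlgHom (FreeAlg T X) Om)) : alpha' (gamma' S) = S.
Proof.
  apply pset_ext.
  - intros k [h [Hh ->]]. exact Hh.
  - intros k Hk. exists (Rm k ∘ eta T X). unfold gamma'.
    rewrite freeHom_surj. auto.
Qed.

Lemma alpha'_lo' (Theta' S : pset (hom C X (carrier Om))) :
  alpha' (lo' ev c Theta' S) = lo ev c (alpha' Theta') (alpha' S).
Proof.
  apply pset_ext.
  - intros g [h [[[k [[l [h' [Hh' ->]]] ->]] | Hh] ->]].
    + left. exists (algcomp (ev l) (liftHom Z (freeHom h'))).
      split; [exists l, (freeHom h'); split; [exists h'; auto | reflexivity] |].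
      apply freeHom_lift_csharp.
    + right. exists h. auto.
  - intros g [[k [[l [k' [[h [Hh ->]] ->]]] ->]] | [h [Hh ->]]].
    + exists (Rm (ev l) ∘ fmap F (str Om) ∘ fmap F (fmap T h) ∘ c).
      split; [| symmetry; apply freeHom_lift_csharp].
      left. eexists. split; [exists l, h; split; auto | reflexivity].
    + exists h. split; [right |]; auto.
Qed.

End LogicAndBehaviour.

Theorem theorem4
  (C : Category) (T : Monad C) (F : Functor C) (Z : DistLaw T F)
  (Psi : Doctrine C) (Om : Alg T) (dOm : fib Psi (carrier Om))
  (Lam : Type) (ev : Lam -> AlgHom (liftF Z Om) Om)
  (X : C) (c : hom C X (F (T X)))
  (Theta : pset (AlgHom (FreeAlg T X) Om))
  (compat : forall S : pset (AlgHom (FreeAlg T X) Om),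
     psubset (LambdaA ev (clA dOm S))
             (clA dOm (LambdaA ev S))) :
  (* (1) *)
  (forall S : pset (AlgHom (FreeAlg T X) Om),
     psubset (lo ev c Theta (clA dOm S)) (clA dOm (lo ev c Theta S))) /\
  (* (2) *)
  alphaA dOm (lfp (lo ev c Theta)) = gfp (be dOm ev c Theta) /\
  (* (3) *)
  (forall Theta' : pset (hom C X (carrier Om)),
     Theta = alpha' Theta' ->
     (forall S : pset (AlgHom (FreeAlg T X) Om),
        alpha' (lo' ev c Theta' (gamma' S)) = lo ev c Theta S) /\
     alphaA dOm (alpha' (lfp (lo' ev c Theta'))) = gfp (be dOm ev c Theta)).
Proof.
  assert (lo_cl := lo_clA (c := c) (Theta := Theta) compat).
  assert (lo_gfp : alphaA dOm (lfp (lo ev c Theta)) = gfp (be dOm ev c Theta)).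
  { apply alphaA_lfp; [apply lo_mono | exact lo_cl | apply be_alphaA_lo]. }
  split; [exact lo_cl |]. split; [exact lo_gfp |].
  intros Theta' ->. split.
  - intros S. rewrite alpha'_lo', alpha'_gamma'. reflexivity.
  - rewrite <- lo_gfp. f_equal.
    apply pimage_lfp; [apply lo'_mono | apply lo_mono | apply alpha'_lo'].
Qed.
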